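(* There exists a constant $C_\xi>0$ depending only on $\xi$ such that for every $\beta>0$, $$\beta x_\beta(q)\le\frac{C_\xi}{\xi(1)-\xi(q)}\quad\text{for all }q\in[0,1).$$
   Context: For $N\ge1$ let $S_N=\{\sigma\in\mathbb R^N:\sum_i\sigma_i^2=N\}$, $m_N$ the uniform probability measure on $S_N$. Let $(\gamma_p)_{p\ge2}$ be real with $\sum_{p\ge2}2^p\gamma_p^2<\infty$, $h\in\mathbb R$, $\xi(s)=\sum_{p\ge2}\gamma_p^2s^p$; $X_N(\sigma)=\sum_{p\ge2}\gamma_pN^{-(p-1)/2}\sum_{i_1,\dots,i_p=1}^N g_{i_1,\dots,i_p}\sigma_{i_1}\cdots\sigma_{i_p}$ with i.i.d. standard Gaussians $g$, and $H_N(\sigma)=X_N(\sigma)+h\sum_i\sigma_i$. For $\beta>0$ let $\xi_\beta=\beta^2\xi$, $h_\beta=\beta h$, $\mathcal M$ the set of distribution functions $x$ on $[0,1]$ with $x(\hat q)=1$ for some $\hat q<1$, $\hat x(q)=\int_q^1x$, and $\mathcal Q_\beta(x)=\frac12\big(\int_0^1(\xi'_\beta(q)+h_\beta^2)x(q)dq+\int_0^{\hat q}\frac{dq}{\hat x(q)}+\log(1-\hat q)\big)$ (any $\hat q<1$ with $x(\hat q)=1$). It is known that $\lim_N\mathbb E\frac1N\log\int_{S_N}e^{\beta H_N}dm_N=\inf_{\mathcal M}\mathcal Q_\beta$ and that this infimum is attained at a unique $x_\beta\in\mathcal M$. *)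

From Stdlib Require Import Reals Lra.
From Coquelicot Require Import Coquelicot.
Open Scope R_scope.

Definition xi (gamma : nat -> R) (s : R) : R :=
  Series (fun p => if (2 <=? p)%nat then (gamma p)^2 * s^p else 0).

Definition xi_beta (gamma : nat -> R) (beta : R) (s : R) : R :=
  beta^2 * xi gamma s.

(* x is a distribution function on [0,1]: values in [0,1], nondecreasing,
   right-continuous on [0,1). Only the values on [0,1] matter. *)
Definition distr_fun01 (x : R -> R) : Prop :=
  (forall q, 0 <= q <= 1 -> 0 <= x q <= 1) /\
  (forall s t, 0 <= s -> s <= t -> t <= 1 -> x s <= x t) /\
  (forall q, 0 <= q < 1 -> forall eps, 0 < eps ->
     exists delta, 0 < delta /\
       forall t, q <= t < q + delta -> Rabs (x t - x q) < eps).

Definition valid_qhat (x : R -> R) (qh : R) : Prop :=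
  0 <= qh < 1 /\ x qh = 1.

Definition inM (x : R -> R) : Prop :=
  distr_fun01 x /\ exists qh, valid_qhat x qh.

Definition xhat (x : R -> R) (q : R) : R := RInt x q 1.

Definition Qbeta (gamma : nat -> R) (h beta : R) (x : R -> R) (qh : R) : R :=
  / 2 * ( RInt (fun q => (Derive (xi_beta gamma beta) q + (beta * h)^2) * x q) 0 1
        + RInt (fun q => / xhat x q) 0 qh
        + ln (1 - qh) ).

(* x is a minimizer of Q_beta over M (the Parisi measure x_beta, which is
   known to exist and be unique) *)
Definition is_minimizer (gamma : nat -> R) (h beta : R) (x : R -> R) : Prop :=
  inM x /\
  forall y, inM y ->
    forall qx qy, valid_qhat x qx -> valid_qhat y qy ->
      Qbeta gamma h beta x qx <= Qbeta gamma h beta y qy.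

From Stdlib Require Import Reals Lra Lia Classical.
From Coquelicot Require Import Coquelicot.
Open Scope R_scope.

(* Compare the minimizer x with the competitor y = x 1_{[r,1]}, which has the same
   \hat q.  Minimality bounds the part of the first term of Q_beta coming from [0,r]
   by the increase r / \hat x(r) of the second term; as x >= x(q) on [q,r] and
   \hat x(r) >= x(q) (1 - r), this gives
     (beta x(q))^2 (xi(r) - xi(q)) (1 - r) <= 1.
   Since xi is Lipschitz on [0,1], choosing 1 - r proportional to xi(1) - xi(q)
   keeps xi(r) - xi(q) >= (xi(1) - xi(q)) / 2 and yields the bound.  Integrability
   of x, of 1 / \hat x and of the integrands of Q_beta follows from monotonicity. *)

Lemma RInt_ext_le (f g : R -> R) (a b : R) : a <= b ->
  (forall t, a < t < b -> f t = g t) -> RInt f a b = RInt g a b.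
Proof.
  intros Hab Hfg. apply RInt_ext. intros t.
  rewrite Rmin_left, Rmax_right by exact Hab. exact (Hfg t).
Qed.

Lemma ex_RInt_ext_le (f g : R -> R) (a b : R) : a <= b ->
  (forall t, a < t < b -> f t = g t) -> ex_RInt f a b -> ex_RInt g a b.
Proof.
  intros Hab Hfg. apply ex_RInt_ext. intros t.
  rewrite Rmin_left, Rmax_right by exact Hab. exact (Hfg t).
Qed.

Lemma RInt_split (f : R -> R) (a b c : R) :
  ex_RInt f a b -> ex_RInt f b c -> RInt f a c = RInt f a b + RInt f b c.
Proof. intros Hab Hbc. rewrite <- (RInt_Chasles f a b c Hab Hbc). reflexivity. Qed.

Lemma RInt_cst (v a b : R) : RInt (fun _ => v) a b = (b - a) * v.
Proof. exact (RInt_const a b v). Qed.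

Lemma ex_RInt_upper_level (f : R -> R) (c a b : R) :
  a <= b -> (forall s t, s <= t -> f s <= f t) ->
  ex_RInt (fun t => if Rle_dec c (f t) then 1 else 0) a b.
Proof.
  intros Hab Hf.
  destruct (classic (exists t, a <= t <= b /\ f t < c)) as [[t1 [Ht1 Hft1]]|Hnone].
  - set (E := fun t => t <= b /\ f t < c).
    assert (HEb : bound E) by (exists b; intros t [Ht _]; exact Ht).
    assert (HEt1 : E t1) by (split; lra).
    destruct (completeness E HEb (ex_intro _ t1 HEt1)) as [s [Hs_ub Hs_lub]].
    assert (Ht1s : t1 <= s) by exact (Hs_ub t1 HEt1).
    assert (Hsb : s <= b) by (apply Hs_lub; intros t [Ht _]; exact Ht).
    apply ex_RInt_Chasles with s.
    + apply ex_RInt_ext_le with (fun _ => 0); [lra| |apply ex_RInt_const].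
      intros t Ht. destruct (Rle_dec c (f t)) as [Hct|]; [|reflexivity].
      (* some point of E lies beyond t, otherwise t would bound E *)
      destruct (classic (exists e, E e /\ t < e)) as [[e [[_ He] Hte]]|Hno].
      * assert (f t <= f e) by (apply Hf; lra). lra.
      * assert (s <= t); [|lra]. apply Hs_lub. intros e He.
        destruct (Rle_dec e t) as [Het|Het]; [exact Het|].
        exfalso. apply Hno. exists e. split; [exact He|lra].
    + apply ex_RInt_ext_le with (fun _ => 1); [lra| |apply ex_RInt_const].
      intros t Ht. destruct (Rle_dec c (f t)) as [|Hct]; [reflexivity|].
      assert (t <= s) by (apply Hs_ub; split; lra). lra.
  - apply ex_RInt_ext_le with (fun _ => 1); [exact Hab| |apply ex_RInt_const].
    intros t Ht. destruct (Rle_dec c (f t)) as [|Hct]; [reflexivity|].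
    exfalso. apply Hnone. exists t. split; lra.
Qed.

Fixpoint level_count (f : R -> R) (c d : R) (K : nat) (t : R) : R :=
  match K with
  | O => 0
  | S k => level_count f c d k t + (if Rle_dec (c + INR (S k) * d) (f t) then 1 else 0)
  end.

Lemma ex_RInt_level_count (f : R -> R) (c d a b : R) (K : nat) :
  a <= b -> (forall s t, s <= t -> f s <= f t) -> ex_RInt (level_count f c d K) a b.
Proof.
  intros Hab Hf. induction K as [|K IH]; simpl.
  - apply ex_RInt_const.
  - apply (ex_RInt_plus (V := R_NormedModule)); [exact IH|].
    apply ex_RInt_upper_level; assumption.
Qed.

Lemma level_count_spec (f : R -> R) (c d t : R) (K : nat) : 0 < d -> c <= f t ->
  (c + INR K * d <= f t -> level_count f c d K t = INR K) /\
  (f t < c + INR K * d ->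
     c + d * level_count f c d K t <= f t < c + d * (level_count f c d K t + 1)).
Proof.
  intros Hd Hc. induction K as [|K [IHreach IHbelow]]; cbn [level_count].
  - simpl INR. split; [reflexivity|lra].
  - rewrite S_INR, Rmult_plus_distr_r, Rmult_1_l. split.
    + intros HK. rewrite IHreach by lra.
      destruct (Rle_dec _ (f t)); [ring|lra].
    + intros HK. destruct (Rle_dec _ (f t)) as [|Hnot]; [lra|].
      rewrite Rplus_0_r. destruct (Rle_dec (c + INR K * d) (f t)) as [Hreach|Hbelow].
      * rewrite (IHreach Hreach). lra.
      * apply IHbelow. lra.
Qed.

Lemma ex_RInt_nondecreasing_bounded (f : R -> R) (lo hi a b : R) : a <= b ->
  (forall s t, s <= t -> f s <= f t) -> (forall t, lo <= f t <= hi) ->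
  ex_RInt f a b.
Proof.
  intros Hab Hf Hbnd.
  destruct (INR_unbounded (hi - lo)) as [D HD].
  set (d := fun n : nat => / INR (S n)).
  assert (Hd : forall n, 0 < d n) by (intros n; apply Rinv_0_lt_compat, lt_0_INR; lia).
  (* [g n] rounds [f] down to the grid [lo + d n * k], [k <= S n * D], which covers [lo, hi] *)
  set (g := fun (n : nat) t => lo + d n * level_count f lo (d n) (S n * D) t).
  assert (Hg_int : forall n, ex_RInt (g n) a b).
  { intros n. apply (ex_RInt_plus (V := R_NormedModule) (fun _ => lo)); [apply ex_RInt_const|].
    apply (ex_RInt_scal (V := R_NormedModule)), ex_RInt_level_count; assumption. }
  assert (Hg_close : forall n t, 0 <= f t - g n t < d n).
  { intros n t.
    assert (Htop : INR (S n * D) * d n = INR D).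
    { rewrite mult_INR. unfold d. field. apply not_0_INR; lia. }
    destruct (level_count_spec f lo (d n) t (S n * D) (Hd n) (proj1 (Hbnd t))) as [_ Hbelow].
    specialize (Hbnd t). unfold g. destruct Hbelow as [Hl Hu]; nra. }
  destruct (filterlim_RInt (V := R_CompleteNormedModule) g a b eventually eventually_filter f
     (fun n => RInt (g n) a b)) as [If [_ HIf]].
  - intros n. apply RInt_correct, Hg_int.
  - apply filterlim_locally. intros eps.
    destruct (archimed_cor1 eps (cond_pos eps)) as [N [HN HN0]].
    exists N. intros n Hn t.
    change (Rabs (g n t - f t) < eps). specialize (Hg_close n t).
    rewrite Rabs_minus_sym, Rabs_pos_eq by lra.
    assert (d n <= / INR N); [|lra].
    apply Rinv_le_contravar; [apply lt_0_INR; lia|apply le_INR; lia].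
  - exists If; exact HIf.
Qed.

Lemma ex_RInt_nondecreasing (f : R -> R) (a b : R) : a <= b ->
  (forall s t, a <= s -> s <= t -> t <= b -> f s <= f t) -> ex_RInt f a b.
Proof.
  intros Hab Hf.
  set (clamp := fun t => Rmax a (Rmin t b)).
  assert (Hclamp : forall t, a <= clamp t <= b).
  { intros t. split; [apply Rmax_l|apply Rmax_lub; [lra|apply Rmin_r]]. }
  apply ex_RInt_ext_le with (fun t => f (clamp t)); [exact Hab| |].
  - intros t Ht. unfold clamp. rewrite Rmin_left, Rmax_right by lra. reflexivity.
  - apply ex_RInt_nondecreasing_bounded with (f a) (f b); [exact Hab| |].
    + intros s t Hst. apply Hf; try apply Hclamp.
      apply Rle_max_compat_l, Rle_min_compat_r, Hst.
    + intros t. split; apply Hf; try apply Hclamp; lra.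
Qed.
Lemma Series_nonneg (u : nat -> R) : (forall n, 0 <= u n) -> ex_series u -> 0 <= Series u.
Proof.
  intros Hu Hex.
  replace 0 with (Series (fun _ => 0 * 1)) by (rewrite Series_scal_l; ring).
  apply Series_le; [|exact Hex]. intros n. split; [lra|]. rewrite Rmult_0_l. apply Hu.
Qed.

Lemma Series_ge_term (u : nat -> R) (p : nat) :
  (forall n, 0 <= u n) -> ex_series u -> u p <= Series u.
Proof.
  intros Hu Hex. rewrite (Series_incr_n u (S p)) by (lia || exact Hex). simpl pred.
  assert (Htail : 0 <= Series (fun k => u (S p + k)%nat)).
  { apply Series_nonneg; [intros; apply Hu|apply ex_series_incr_n, Hex]. }
  destruct p as [|p]; simpl sum_f_R0; [lra|].
  assert (0 <= sum_f_R0 u p) by (apply cond_pos_sum, Hu). lra.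
Qed.

Lemma pow_lt_pow_l (s t : R) (n : nat) : 0 <= s < t -> (0 < n)%nat -> s ^ n < t ^ n.
Proof.
  intros Hst Hn. induction n as [|n IH]; [lia|].
  destruct n as [|n]; [simpl; lra|].
  assert (s ^ S n < t ^ S n) by (apply IH; lia).
  assert (0 <= s ^ S n) by (apply pow_le; lra).
  change (s * s ^ S n < t * t ^ S n). nra.
Qed.

Lemma ex_series_of_pseries (a : nat -> R) (x : R) :
  ex_pseries a x -> ex_series (fun k => a k * x ^ k).
Proof.
  apply ex_series_ext. intros n. rewrite pow_n_pow. unfold scal; simpl; unfold mult; simpl. ring.
Qed.

Section NonnegPowerSeries.

Variable a : nat -> R.
Hypothesis a_ge0 : forall n, 0 <= a n.

Lemma PSeries_nonneg_le (s t : R) :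
  0 <= s -> s <= t -> Rbar_lt (Rabs t) (CV_radius a) -> 0 <= PSeries a s <= PSeries a t.
Proof.
  intros Hs Hst Ht.
  assert (Hs_in : Rbar_lt (Rabs s) (CV_radius a)).
  { apply Rbar_le_lt_trans with (Rabs t); [simpl; rewrite !Rabs_pos_eq; lra|exact Ht]. }
  assert (Hex_s := ex_series_of_pseries a s (CV_radius_inside a s Hs_in)).
  assert (Hex_t := ex_series_of_pseries a t (CV_radius_inside a t Ht)).
  unfold PSeries. split.
  - apply Series_nonneg; [|exact Hex_s]. intros n. apply Rmult_le_pos; [apply a_ge0|apply pow_le, Hs].
  - apply Series_le; [|exact Hex_t]. intros n. split.
    + apply Rmult_le_pos; [apply a_ge0|apply pow_le, Hs].
    + apply Rmult_le_compat_l; [apply a_ge0|apply pow_incr; lra].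
Qed.

Lemma PSeries_lt (p : nat) (s t : R) : (0 < p)%nat -> 0 < a p ->
  0 <= s -> s < t -> Rbar_lt (Rabs t) (CV_radius a) -> PSeries a s < PSeries a t.
Proof.
  intros Hp Hap Hs Hst Ht.
  assert (Hs_in : Rbar_lt (Rabs s) (CV_radius a)).
  { apply Rbar_le_lt_trans with (Rabs t); [simpl; rewrite !Rabs_pos_eq; lra|exact Ht]. }
  assert (Hex_s := ex_series_of_pseries a s (CV_radius_inside a s Hs_in)).
  assert (Hex_t := ex_series_of_pseries a t (CV_radius_inside a t Ht)).
  set (u := fun k => a k * t ^ k - a k * s ^ k).
  assert (Hu : forall k, 0 <= u k).
  { intros k. unfold u. rewrite <- Rmult_minus_distr_l.
    apply Rmult_le_pos; [apply a_ge0|]. assert (s ^ k <= t ^ k) by (apply pow_incr; lra). lra. }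
  assert (Hup : 0 < u p).
  { unfold u. rewrite <- Rmult_minus_distr_l. apply Rmult_lt_0_compat; [exact Hap|].
    assert (s ^ p < t ^ p) by (apply pow_lt_pow_l; [lra|exact Hp]). lra. }
  assert (Hex_u : ex_series u) by (apply (ex_series_minus (V := R_NormedModule)); assumption).
  assert (Hgap : PSeries a t - PSeries a s = Series u) by (symmetry; apply Series_minus; assumption).
  assert (u p <= Series u) by (apply Series_ge_term; assumption). lra.
Qed.

End NonnegPowerSeries.

Definition xi_coef (gamma : nat -> R) (p : nat) : R :=
  if (2 <=? p)%nat then gamma p ^ 2 else 0.

Definition xi_deriv (gamma : nat -> R) : R -> R := PSeries (PS_derive (xi_coef gamma)).

Lemma xi_coef_ge0 (gamma : nat -> R) (p : nat) : 0 <= xi_coef gamma p.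
Proof. unfold xi_coef. destruct (2 <=? p)%nat; [apply pow2_ge_0|lra]. Qed.

Lemma PS_derive_xi_coef_ge0 (gamma : nat -> R) (p : nat) : 0 <= PS_derive (xi_coef gamma) p.
Proof. apply Rmult_le_pos; [apply pos_INR|apply xi_coef_ge0]. Qed.

Lemma xi_PSeries (gamma : nat -> R) (s : R) : xi gamma s = PSeries (xi_coef gamma) s.
Proof.
  unfold xi, PSeries. apply Series_ext. intros n. unfold xi_coef.
  destruct (2 <=? n)%nat; ring.
Qed.

Section XiOnUnitInterval.

Variable gamma : nat -> R.
Hypothesis summable : ex_series (fun p => 2 ^ p * gamma p ^ 2).

Lemma CV_radius_xi_coef : Rbar_le 2 (CV_radius (xi_coef gamma)).
Proof.
  destruct (Lub_Rbar_correct (CV_disk (xi_coef gamma))) as [Hub _].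
  apply Hub. apply (ex_series_le (V := R_CompleteNormedModule)) with (2 := summable).
  intros n. change (Rabs (Rabs (xi_coef gamma n * 2 ^ n)) <= 2 ^ n * gamma n ^ 2).
  rewrite Rabs_Rabsolu, Rabs_pos_eq
    by (apply Rmult_le_pos; [apply xi_coef_ge0|apply pow_le; lra]).
  unfold xi_coef. destruct (2 <=? n)%nat; [lra|].
  rewrite Rmult_0_l. apply Rmult_le_pos; [apply pow_le; lra|apply pow2_ge_0].
Qed.

Lemma xi_coef_radius (t : R) : 0 <= t <= 1 -> Rbar_lt (Rabs t) (CV_radius (xi_coef gamma)).
Proof.
  intros Ht. apply Rbar_lt_le_trans with 2; [simpl; rewrite Rabs_pos_eq; lra|].
  exact CV_radius_xi_coef.
Qed.

Lemma is_derive_xi (t : R) : 0 <= t <= 1 -> is_derive (xi gamma) t (xi_deriv gamma t).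
Proof.
  intros Ht. apply is_derive_ext with (PSeries (xi_coef gamma)).
  - intros s. symmetry. apply xi_PSeries.
  - apply is_derive_PSeries, xi_coef_radius, Ht.
Qed.

Lemma xi_deriv_nonneg_le (s t : R) :
  0 <= s -> s <= t -> t <= 1 -> 0 <= xi_deriv gamma s <= xi_deriv gamma t.
Proof.
  intros Hs Hst Ht. apply PSeries_nonneg_le; [apply PS_derive_xi_coef_ge0|lra|lra|].
  rewrite CV_radius_derive. apply xi_coef_radius. lra.
Qed.

Lemma is_RInt_xi_deriv (a b : R) :
  0 <= a -> a <= b -> b <= 1 -> is_RInt (xi_deriv gamma) a b (xi gamma b - xi gamma a).
Proof.
  intros Ha Hab Hb. apply (is_RInt_derive (V := R_CompleteNormedModule)); intros t;
    rewrite Rmin_left, Rmax_right by exact Hab; intros Ht.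
  - apply is_derive_xi. lra.
  - apply continuity_pt_filterlim, PSeries_continuity.
    rewrite CV_radius_derive. apply xi_coef_radius. lra.
Qed.

Lemma xi_sub_le (a b : R) :
  0 <= a -> a <= b -> b <= 1 -> xi gamma b - xi gamma a <= xi_deriv gamma 1 * (b - a).
Proof.
  intros Ha Hab Hb.
  assert (HI := is_RInt_xi_deriv a b Ha Hab Hb).
  rewrite <- (is_RInt_unique _ _ _ _ HI), Rmult_comm, <- RInt_cst.
  apply RInt_le; [exact Hab|exists (xi gamma b - xi gamma a); exact HI|apply ex_RInt_const|].
  intros t Ht. apply xi_deriv_nonneg_le; lra.
Qed.

Lemma xi_lt_xi1 (q : R) : (exists p, (2 <= p)%nat /\ gamma p <> 0) ->
  0 <= q < 1 -> xi gamma q < xi gamma 1.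
Proof.
  intros [p [Hp Hgp]] Hq. rewrite !xi_PSeries.
  apply PSeries_lt with p; [apply xi_coef_ge0|lia| |lra|lra|apply xi_coef_radius; lra].
  unfold xi_coef. replace (2 <=? p)%nat with true by (symmetry; apply Nat.leb_le, Hp).
  apply pow2_gt_0, Hgp.
Qed.

End XiOnUnitInterval.

Section DistributionFunction.

Variable z : R -> R.
Hypothesis z_distr : distr_fun01 z.

Lemma distr_fun01_range (t : R) : 0 <= t <= 1 -> 0 <= z t <= 1.
Proof. apply (proj1 z_distr). Qed.

Lemma distr_fun01_le (s t : R) : 0 <= s -> s <= t -> t <= 1 -> z s <= z t.
Proof. apply (proj1 (proj2 z_distr)). Qed.

Lemma ex_RInt_distr (a b : R) : 0 <= a -> a <= b -> b <= 1 -> ex_RInt z a b.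
Proof.
  intros Ha Hab Hb. apply ex_RInt_nondecreasing; [exact Hab|].
  intros s t Hs Hst Ht. apply distr_fun01_le; lra.
Qed.

Lemma ex_RInt_mul_distr (F : R -> R) (a b : R) :
  (forall s t, 0 <= s -> s <= t -> t <= 1 -> 0 <= F s <= F t) ->
  0 <= a -> a <= b -> b <= 1 -> ex_RInt (fun t => F t * z t) a b.
Proof.
  intros HF Ha Hab Hb. apply ex_RInt_nondecreasing; [exact Hab|].
  intros s t Hs Hst Ht.
  assert (0 <= F s <= F t) by (apply HF; lra).
  assert (0 <= z s) by (apply distr_fun01_range; lra).
  assert (z s <= z t) by (apply distr_fun01_le; lra).
  apply Rmult_le_compat; lra.
Qed.

Lemma xhat_split (s t : R) : 0 <= s -> s <= t -> t <= 1 -> xhat z s = RInt z s t + xhat z t.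
Proof. intros Hs Hst Ht. apply RInt_split; apply ex_RInt_distr; lra. Qed.

Lemma xhat_le (s t : R) : 0 <= s -> s <= t -> t <= 1 -> xhat z t <= xhat z s.
Proof.
  intros Hs Hst Ht. rewrite (xhat_split s t) by assumption.
  assert (0 <= RInt z s t); [|lra].
  apply RInt_ge_0; [exact Hst|apply ex_RInt_distr; lra|].
  intros u Hu. apply distr_fun01_range. lra.
Qed.

Lemma xhat_ge (q r : R) : 0 <= q -> q <= r -> r <= 1 -> z q * (1 - r) <= xhat z r.
Proof.
  intros Hq Hqr Hr. rewrite Rmult_comm, <- RInt_cst.
  apply RInt_le; [exact Hr|apply ex_RInt_const|apply ex_RInt_distr; lra|].
  intros t Ht. apply distr_fun01_le; lra.
Qed.

Lemma xhat_ge_qhat (Q t : R) : valid_qhat z Q -> 0 <= t <= Q -> 1 - Q <= xhat z t.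
Proof.
  intros [HQ HzQ] Ht.
  assert (z Q * (1 - Q) <= xhat z Q) by (apply xhat_ge; lra).
  assert (xhat z Q <= xhat z t) by (apply xhat_le; lra).
  rewrite HzQ in *. lra.
Qed.

Lemma ex_RInt_inv_xhat (Q a b : R) : valid_qhat z Q -> 0 <= a -> a <= b -> b <= Q ->
  ex_RInt (fun t => / xhat z t) a b.
Proof.
  intros HQ Ha Hab Hb. pose proof (proj1 HQ) as HQ1.
  apply ex_RInt_nondecreasing; [exact Hab|]. intros s t Hs Hst Ht.
  assert (1 - Q <= xhat z t) by (apply (xhat_ge_qhat Q t HQ); lra).
  assert (xhat z t <= xhat z s) by (apply xhat_le; lra).
  apply Rinv_le_contravar; lra.
Qed.

End DistributionFunction.

Definition truncation (x : R -> R) (r : R) : R -> R :=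
  fun s => if Rlt_dec s r then 0 else x s.

Lemma truncation_lt (x : R -> R) (r s : R) : s < r -> truncation x r s = 0.
Proof. intros Hs. unfold truncation. destruct (Rlt_dec s r); [reflexivity|lra]. Qed.

Lemma truncation_ge (x : R -> R) (r s : R) : r <= s -> truncation x r s = x s.
Proof. intros Hs. unfold truncation. destruct (Rlt_dec s r); [lra|reflexivity]. Qed.

Lemma distr_fun01_truncation (x : R -> R) (r : R) :
  distr_fun01 x -> distr_fun01 (truncation x r).
Proof.
  intros Hx. split; [|split].
  - intros t Ht. destruct (Rlt_dec t r) as [Htr|Htr].
    + rewrite truncation_lt by exact Htr. lra.
    + rewrite truncation_ge by lra. apply (distr_fun01_range x Hx). exact Ht.
  - intros s t Hs Hst Ht. destruct (Rlt_dec s r) as [Hsr|Hsr].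
    + rewrite (truncation_lt x r s Hsr). destruct (Rlt_dec t r) as [Htr|Htr].
      * rewrite truncation_lt by exact Htr. lra.
      * rewrite truncation_ge by lra. apply (distr_fun01_range x Hx). lra.
    + rewrite !truncation_ge by lra. apply (distr_fun01_le x Hx); assumption.
  - intros t Ht eps Heps. destruct (Rlt_dec t r) as [Htr|Htr].
    + exists (r - t). split; [lra|]. intros u Hu.
      rewrite !truncation_lt by lra. rewrite Rminus_0_r, Rabs_R0. exact Heps.
    + destruct (proj2 (proj2 Hx) t Ht eps Heps) as [delta [Hdelta Hcont]].
      exists delta. split; [exact Hdelta|]. intros u Hu.
      rewrite !truncation_ge by lra. apply Hcont, Hu.
Qed.

Lemma valid_qhat_truncation (x : R -> R) (r Q : R) :
  valid_qhat x Q -> r <= Q -> valid_qhat (truncation x r) Q.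
Proof. intros [HQ HxQ] HrQ. split; [exact HQ|]. rewrite truncation_ge; assumption. Qed.

Lemma valid_qhat_max (x : R -> R) (qh r : R) : distr_fun01 x ->
  valid_qhat x qh -> 0 <= r < 1 -> valid_qhat x (Rmax qh r).
Proof.
  intros Hx [Hqh Hxqh] Hr.
  assert (Hmax : qh <= Rmax qh r /\ r <= Rmax qh r) by (split; [apply Rmax_l|apply Rmax_r]).
  assert (Hmax1 : Rmax qh r < 1) by (apply Rmax_lub_lt; lra).
  split; [lra|]. apply Rle_antisym.
  - apply (distr_fun01_range x Hx). lra.
  - rewrite <- Hxqh. apply (distr_fun01_le x Hx); lra.
Qed.

Lemma RInt_inv_xhat_truncation (x : R -> R) (r Q : R) : distr_fun01 x ->
  valid_qhat x Q -> 0 <= r <= Q ->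
  RInt (fun t => / xhat (truncation x r) t) 0 Q =
  r / xhat x r + RInt (fun t => / xhat x t) r Q.
Proof.
  intros Hx HQ Hr. pose proof (proj1 HQ) as HQ1.
  assert (Hy := distr_fun01_truncation x r Hx).
  assert (HyQ := valid_qhat_truncation x r Q HQ (proj2 Hr)).
  assert (Hxhat : forall t, r <= t <= 1 -> xhat (truncation x r) t = xhat x t).
  { intros t Ht. apply RInt_ext_le; [lra|]. intros u Hu. apply truncation_ge. lra. }
  rewrite (RInt_split _ 0 r Q) by (apply (ex_RInt_inv_xhat _ Hy Q); auto; lra).
  f_equal.
  - rewrite (RInt_ext_le _ (fun _ => / xhat x r) 0 r), RInt_cst, Rminus_0_r; [reflexivity|lra|].
    intros t Ht. f_equal.
    rewrite (xhat_split _ Hy t r), Hxhat by lra.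
    rewrite (RInt_ext_le _ (fun _ => 0) t r), RInt_cst by
      (lra || (intros u Hu; apply truncation_lt; lra)).
    ring.
  - apply RInt_ext_le; [lra|]. intros t Ht. rewrite Hxhat by lra. reflexivity.
Qed.

Definition parisi_weight (gamma : nat -> R) (h beta t : R) : R :=
  beta ^ 2 * xi_deriv gamma t + (beta * h) ^ 2.

Section ParisiFunctional.

Variables (gamma : nat -> R) (h beta : R).
Hypothesis summable : ex_series (fun p => 2 ^ p * gamma p ^ 2).

Let w := parisi_weight gamma h beta.

Lemma parisi_weight_nonneg_le (s t : R) : 0 <= s -> s <= t -> t <= 1 -> 0 <= w s <= w t.
Proof.
  intros Hs Hst Ht. unfold w, parisi_weight.
  assert (0 <= xi_deriv gamma s <= xi_deriv gamma t) by (apply xi_deriv_nonneg_le; assumption).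
  assert (0 <= beta ^ 2) by apply pow2_ge_0.
  assert (0 <= (beta * h) ^ 2) by apply pow2_ge_0.
  split; nra.
Qed.

Lemma is_RInt_parisi_weight (a b : R) : 0 <= a -> a <= b -> b <= 1 ->
  is_RInt w a b (beta ^ 2 * (xi gamma b - xi gamma a) + (beta * h) ^ 2 * (b - a)).
Proof.
  intros Ha Hab Hb. rewrite (Rmult_comm _ (b - a)).
  apply (is_RInt_plus (V := R_NormedModule)).
  - apply (is_RInt_scal (V := R_NormedModule)), is_RInt_xi_deriv; assumption.
  - apply (is_RInt_const (V := R_NormedModule)).
Qed.

Lemma Qbeta_parisi_weight (z : R -> R) (Q : R) :
  Qbeta gamma h beta z Q =
  / 2 * (RInt (fun t => w t * z t) 0 1 + RInt (fun t => / xhat z t) 0 Q + ln (1 - Q)).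
Proof.
  unfold Qbeta. do 3 f_equal. apply RInt_ext_le; [lra|]. intros t Ht.
  unfold w, parisi_weight. do 2 f_equal.
  apply is_derive_unique, is_derive_scal, is_derive_xi; [exact summable|lra].
Qed.

Lemma ex_RInt_weight (z : R -> R) (a b : R) : distr_fun01 z ->
  0 <= a -> a <= b -> b <= 1 -> ex_RInt (fun t => w t * z t) a b.
Proof. intros Hz. apply ex_RInt_mul_distr; [exact Hz|exact parisi_weight_nonneg_le]. Qed.

Section WeightedIntegrals.

Variable x : R -> R.
Hypothesis x_distr : distr_fun01 x.

Lemma RInt_weight_truncation (r : R) : 0 <= r <= 1 ->
  RInt (fun t => w t * truncation x r t) 0 1 = RInt (fun t => w t * x t) r 1.
Proof.
  intros Hr. assert (Hy := distr_fun01_truncation x r x_distr).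
  rewrite (RInt_split _ 0 r 1) by (apply ex_RInt_weight; auto; lra).
  rewrite (RInt_ext_le _ (fun _ => 0) 0 r), RInt_cst, Rmult_0_r, Rplus_0_l by
    (lra || (intros t Ht; rewrite truncation_lt by lra; apply Rmult_0_r)).
  apply RInt_ext_le; [lra|]. intros t Ht. rewrite truncation_ge by lra. reflexivity.
Qed.

Lemma RInt_weight_ge (q r : R) : 0 <= q -> q <= r -> r <= 1 ->
  x q * (beta ^ 2 * (xi gamma r - xi gamma q)) <= RInt (fun t => w t * x t) 0 r.
Proof.
  intros Hq Hqr Hr.
  assert (Hxq : 0 <= x q <= 1) by (apply (distr_fun01_range x x_distr); lra).
  assert (HI := is_RInt_parisi_weight q r Hq Hqr Hr).
  set (I := beta ^ 2 * (xi gamma r - xi gamma q) + (beta * h) ^ 2 * (r - q)) in HI.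
  assert (Hhq : 0 <= (beta * h) ^ 2 * (r - q)) by (apply Rmult_le_pos; [apply pow2_ge_0|lra]).
  rewrite (RInt_split _ 0 q r) by (apply ex_RInt_weight; auto; lra).
  assert (0 <= RInt (fun t => w t * x t) 0 q).
  { apply RInt_ge_0; [exact Hq|apply ex_RInt_weight; auto; lra|]. intros t Ht.
    apply Rmult_le_pos; [apply (parisi_weight_nonneg_le t t)|apply (distr_fun01_range x x_distr)]; lra. }
  assert (x q * I <= RInt (fun t => w t * x t) q r).
  { assert (HmI : is_RInt (fun t => x q * w t) q r (x q * I))
      by apply (is_RInt_scal (V := R_NormedModule)), HI.
    rewrite <- (is_RInt_unique _ _ _ _ HmI).
    apply RInt_le; [exact Hqr|exists (x q * I); exact HmI|apply ex_RInt_weight; auto; lra|].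
    intros t Ht. rewrite Rmult_comm.
    apply Rmult_le_compat_l; [apply (parisi_weight_nonneg_le t t); lra|].
    apply (distr_fun01_le x x_distr); lra. }
  assert (x q * ((beta * h) ^ 2 * (r - q)) >= 0) by (apply Rle_ge, Rmult_le_pos; lra).
  unfold I in *. nra.
Qed.

End WeightedIntegrals.

Section Minimizer.

Variable x : R -> R.
Hypothesis x_min : is_minimizer gamma h beta x.

Lemma minimizer_weight_le (r : R) : 0 <= r < 1 ->
  RInt (fun t => w t * x t) 0 r <= r / xhat x r.
Proof.
  intros Hr. destruct x_min as [[Hx [qh Hqh]] Hmin].
  set (Q := Rmax qh r).
  assert (HQ : valid_qhat x Q) by (apply valid_qhat_max; assumption).
  assert (HrQ : r <= Q) by apply Rmax_r.
  pose proof (proj1 HQ) as HQ1.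
  (* both competitors use the same \hat q, so the [ln] terms cancel *)
  assert (Hcmp := Hmin (truncation x r)
    (conj (distr_fun01_truncation x r Hx) (ex_intro _ Q (valid_qhat_truncation x r Q HQ HrQ)))
    Q Q HQ (valid_qhat_truncation x r Q HQ HrQ)).
  rewrite !Qbeta_parisi_weight, RInt_weight_truncation, RInt_inv_xhat_truncation in Hcmp
    by (assumption || lra).
  rewrite (RInt_split _ 0 r 1) in Hcmp by (apply ex_RInt_weight; auto; lra).
  rewrite (RInt_split _ 0 r Q) in Hcmp by (apply (ex_RInt_inv_xhat _ Hx Q); auto; lra).
  assert (0 <= RInt (fun t => / xhat x t) 0 r); [|lra].
  apply RInt_ge_0; [lra|apply (ex_RInt_inv_xhat _ Hx Q); auto; lra|].
  intros t Ht. apply Rlt_le, Rinv_0_lt_compat.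
  assert (1 - Q <= xhat x t) by (apply (xhat_ge_qhat _ Hx Q t HQ); lra). lra.
Qed.

Lemma minimizer_bound (q r : R) : 0 <= q -> q < r -> r < 1 ->
  (beta * x q) ^ 2 * (xi gamma r - xi gamma q) * (1 - r) <= 1.
Proof.
  intros Hq Hqr Hr. pose proof (proj1 (proj1 x_min)) as Hx.
  set (m := x q). set (A := xhat x r).
  assert (Hm : 0 <= m <= 1) by (apply (distr_fun01_range x Hx); lra).
  assert (HmA : m * (1 - r) <= A) by (apply (xhat_ge x Hx); lra).
  assert (Hupper := minimizer_weight_le r (conj (Rle_trans _ _ _ Hq (Rlt_le _ _ Hqr)) Hr)).
  assert (Hlower := RInt_weight_ge x Hx q r Hq (Rlt_le _ _ Hqr) (Rlt_le _ _ Hr)).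
  fold m A in Hupper, Hlower.
  destruct (Req_dec m 0) as [Hm0|Hm0].
  { rewrite Hm0. lra. }
  assert (HA : 0 < A) by (assert (0 < m * (1 - r)) by (apply Rmult_lt_0_compat; lra); lra).
  (* multiply [m beta^2 (xi r - xi q) <= r / A] by [m (1 - r) <= A] *)
  assert (Hmr : 0 <= m * (1 - r)) by (apply Rmult_le_pos; lra).
  apply Rle_trans with (r / A * (m * (1 - r))).
  - replace ((beta * m) ^ 2 * (xi gamma r - xi gamma q) * (1 - r))
      with (m * (beta ^ 2 * (xi gamma r - xi gamma q)) * (m * (1 - r))) by ring.
    apply Rmult_le_compat_r; lra.
  - apply Rle_trans with (r / A * A).
    + apply Rmult_le_compat_l; [apply Rdiv_le_0_compat; lra|exact HmA].
    + unfold Rdiv. rewrite Rmult_assoc, Rinv_l by lra. lra.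
Qed.

End Minimizer.

End ParisiFunctional.

Lemma le_div_of_sq_mul_le (v D G L : R) : 0 <= v -> 0 < D -> 0 <= L -> D / 2 <= G ->
  v ^ 2 * G * (D / (2 * (L + 1))) <= 1 -> v <= 2 * (L + 1) / D.
Proof.
  intros Hv HD HL HG Hbound.
  assert (HvD : (v * D) ^ 2 <= 4 * (L + 1)).
  { replace ((v * D) ^ 2) with (v ^ 2 * (D / 2) * (D / (2 * (L + 1))) * (4 * (L + 1)))
      by (field; lra).
    assert (v ^ 2 * (D / 2) * (D / (2 * (L + 1))) <= 1); [|nra].
    apply Rle_trans with (2 := Hbound). apply Rmult_le_compat_r.
    - apply Rdiv_le_0_compat; lra.
    - apply Rmult_le_compat_l; [apply pow2_ge_0|exact HG]. }
  assert (v * D <= 2 * (L + 1)) by nra.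
  apply Rmult_le_reg_r with D; [exact HD|]. unfold Rdiv. rewrite Rmult_assoc, Rinv_l by lra. lra.
Qed.

Theorem lemma1 :
  forall gamma : nat -> R,
    ex_series (fun p => 2 ^ p * (gamma p) ^ 2) ->
    (exists p, (2 <= p)%nat /\ gamma p <> 0) ->
    exists C : R, 0 < C /\
      forall (h beta : R), 0 < beta ->
        forall x : R -> R, is_minimizer gamma h beta x ->
          forall q, 0 <= q < 1 ->
            beta * x q <= C / (xi gamma 1 - xi gamma q).
Proof.
  intros gamma summable nondegenerate.
  set (L := xi_deriv gamma 1).
  assert (HL : 0 <= L) by (apply (xi_deriv_nonneg_le gamma summable 1 1); lra).
  exists (2 * (L + 1)). split; [lra|].
  intros h beta Hbeta x x_min q Hq.
  assert (Hx : 0 <= x q) by (apply (distr_fun01_range x (proj1 (proj1 x_min))); lra).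
  set (D := xi gamma 1 - xi gamma q).
  assert (HD : 0 < D) by (pose proof (xi_lt_xi1 gamma summable q nondegenerate Hq); unfold D; lra).
  assert (HDq : D <= L * (1 - q)) by (apply (xi_sub_le gamma summable); lra).
  (* [1 - r] is chosen so that the Lipschitz bound on [xi] leaves [xi r - xi q >= D / 2] *)
  set (r := 1 - D / (2 * (L + 1))).
  assert (Hr : 1 - r = D / (2 * (L + 1))) by (unfold r; ring).
  assert (Hr_pos : 0 < D / (2 * (L + 1))) by (apply Rdiv_lt_0_compat; lra).
  assert (Hqr : q < r).
  { assert (D / (2 * (L + 1)) < 1 - q); [|lra].
    apply Rmult_lt_reg_r with (2 * (L + 1)); [lra|].
    unfold Rdiv. rewrite Rmult_assoc, Rinv_l by lra. nra. }
  assert (Hgap : D / 2 <= xi gamma r - xi gamma q).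
  { assert (xi gamma 1 - xi gamma r <= L * (1 - r)) by (apply (xi_sub_le gamma summable); lra).
    assert (L * (1 - r) <= D / 2); [|unfold D in *; lra].
    rewrite Hr. apply Rmult_le_reg_r with (2 * (L + 1)); [lra|].
    field_simplify; [nra|lra]. }
  apply le_div_of_sq_mul_le with (xi gamma r - xi gamma q);
    [apply Rmult_le_pos; lra|lra|lra|lra|].
  rewrite <- Hr. apply (minimizer_bound gamma h beta summable x x_min); lra.
Qed.
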